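(* Let $\sigma=1^a21^b$ with $a\ge1$, $b\ge0$, and let $k=a+b+1$. Let $T$ be a set of patterns and $T'=\{1(\tau+1):\tau\in T\}$. For a set of patterns $R$ let $f_n(\sigma,R)$ be the number of partitions of $[n]$ avoiding $\sigma$ and every pattern in $R$. Then for every $n\ge1$, \[f_n(\sigma,T')=\sum_{i=1}^{k-2}f_{n-i}(\sigma,T)\binom{n-1}{i-1}+\sum_{i=k-1}^{n}f_{n-i}(\sigma,T)\binom{n-i+k-3}{k-3},\] where $f_m=0$ for $m<0$, and binomial coefficients $\binom{m}{-1}$ (arising only when $k=2$) are interpreted as $1$ if $m=-1$ and $0$ if $m\ge0$.
   Context: Set partitions are written in canonical sequential form (restricted growth words). Pattern containment means having a subsequence order-isomorphic to the pattern. For a word $\tau$, $\tau+1$ adds $1$ to every letter, so $1(\tau+1)$ is the pattern obtained by prefixing a new smallest block containing only the first element; $1^a$ denotes $a$ copies of $1$. *)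

From Stdlib Require Import ClassicalEpsilon.
From mathcomp Require Import all_boot.
Set Implicit Arguments. Unset Strict Implicit. Unset Printing Implicit Defensive.

(* Restricted growth words with letters 1,2,3,... (canonical sequential form):
   first letter 1, each letter at most 1 + max of the previous ones. *)
Fixpoint rgw_from (m : nat) (s : seq nat) : bool :=
  match s with
  | [::] => true
  | x :: s' => [&& 0 < x, x <= m.+1 & rgw_from (maxn m x) s']
  end.
Definition rgw (s : seq nat) : bool := rgw_from 0 s.

Definition order_iso (s p : seq nat) : bool :=
  (size s == size p) &&
  [forall i : 'I_(size s), forall j : 'I_(size s),
     ((nth 0 s i < nth 0 s j) == (nth 0 p i < nth 0 p j)) &&
     ((nth 0 s i == nth 0 s j) == (nth 0 p i == nth 0 p j))].

Definition contains (w p : seq nat) : bool :=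
  [exists m : (size w).-tuple bool, order_iso (mask m w) p].

Definition avoids_all (w : seq nat) (R : seq nat -> Prop) : Prop :=
  forall p, R p -> ~~ contains w p.

Definition decP (P : Prop) : bool :=
  if excluded_middle_informative P then true else false.

(* f_n(sigma, R): number of partitions of [n] (RGWs of length n; their
   letters are <= n, hence encoded as n-tuples over 'I_(n+1)) avoiding
   sigma and every pattern in R. *)
Definition fcount (n : nat) (sigma : seq nat) (R : seq nat -> Prop) : nat :=
  #|[set t : n.-tuple 'I_n.+1 |
      [&& rgw (map val t), ~~ contains (map val t) sigma
        & decP (avoids_all (map val t) R)]]|.

Definition sigma_ab (a b : nat) : seq nat := nseq a 1 ++ 2 :: nseq b 1.

Definition liftT (T : seq nat -> Prop) : seq nat -> Prop :=
  fun p => exists tau, T tau /\ p = 1 :: map S tau.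

Definition fshift (n i : nat) (sigma : seq nat) (R : seq nat -> Prop) : nat :=
  if i <= n then fcount (n - i) sigma R else 0.

(* A restricted growth word w = 1 w' of length n >= 1 is determined by
   - the bit sequence [ones_of w] marking its letters equal to 1, and
   - the word [rest_of w] of its letters > 1, each decremented, which is again
     a restricted growth word;
   conversely w = weave (ones_of w) (rest_of w).  Under this bijection
   - w avoids 1(tau+1) iff rest_of w avoids tau, since an occurrence must start
     with a 1 and continue with letters > 1 only;
   - w contains sigma iff rest_of w does, or some letter > 1 of w has at least
     a ones before it and at least b ones after it, a condition on the bit
     sequence alone (a "forbidden gap").
   So f_n(sigma,T') = sum_i G(n,i) f_{n-i}(sigma,T), where G(n,i) counts the
   bit sequences of length n starting with a one, with i ones and no zero in a
   forbidden gap.  The n-i zeros are distributed among the allowed gaps, those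
   after the j-th one with j < a or i - j < b, and stars and bars gives
   G(n,i) = C(n-1,i-1) for i < a+b (all i gaps allowed) and
   G(n,i) = C(n-i+k-3,k-3) for i >= a+b (exactly k-2 gaps allowed). *)

From Stdlib Require Import ClassicalEpsilon.
From Pilot Require Import Defs.
From mathcomp Require Import all_boot zify.
Set Implicit Arguments. Unset Strict Implicit. Unset Printing Implicit Defensive.

Lemma order_isoP s p :
  reflect (size s = size p /\ forall i j, i < size s -> j < size s ->
     ((nth 0 s i < nth 0 s j) = (nth 0 p i < nth 0 p j)) /\
     ((nth 0 s i == nth 0 s j) = (nth 0 p i == nth 0 p j)))
   (order_iso s p).
Proof.
rewrite /order_iso; apply: (iffP andP).
  case=> /eqP -> /forallP H; split=> // i j hi hj.
  have /forallP/(_ (Ordinal hj)) := H (Ordinal hi).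
  by case/andP=> /eqP -> /eqP ->.
case=> -> H; split=> //; apply/forallP=> i; apply/forallP=> j.
by have [-> ->] := H i j (ltn_ord i) (ltn_ord j); rewrite !eqxx.
Qed.

Lemma containsP w p :
  reflect (exists s, subseq s w /\ order_iso s p) (contains w p).
Proof.
apply: (iffP existsP).
  by case=> m h; exists (mask m w); split=> //; apply: mask_subseq.
case=> s [/subseqP [m hm ->] h].
by exists (Tuple (introT eqP hm)).
Qed.

Lemma order_iso_mapS s p : order_iso (map S s) p = order_iso s p.
Proof.
apply/order_isoP/order_isoP; rewrite size_map => -[hs H]; split=> // i j hi hj.
  by have := H i j hi hj; rewrite !(nth_map 0) // ltnS eqSS.
by rewrite !(nth_map 0) // ltnS eqSS; apply: H.
Qed.

Lemma subseq_mapP (T1 T2 : eqType) (f : T1 -> T2) s w :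
  reflect (exists2 s0, subseq s0 w & s = map f s0) (subseq s (map f w)).
Proof.
apply: (iffP subseqP).
  case=> m; rewrite size_map => hm ->; exists (mask m w); rewrite ?map_mask //.
  exact: mask_subseq.
case=> s0 /subseqP [m hm ->] ->; exists m; rewrite ?size_map ?map_mask //.
Qed.

Lemma contains_mapS u p : contains (map S u) p = contains u p.
Proof.
apply/containsP/containsP => -[s [hs hi]].
  case/subseq_mapP: hs => s0 h0 e; subst s; exists s0; split=> //.
  by rewrite -order_iso_mapS.
by exists (map S s); split; [exact: map_subseq | rewrite order_iso_mapS].
Qed.

Lemma size_nseq_pat a b (x y : nat) : size (nseq a x ++ y :: nseq b x) = a + b + 1.
Proof. by rewrite size_cat /= !size_nseq addnS addn1. Qed.

Lemma nth_nseq_pat a b x y i : i < a + b + 1 ->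
  nth 0 (nseq a x ++ y :: nseq b x) i = if i == a then y else x.
Proof.
move=> hi; rewrite nth_cat size_nseq nth_nseq.
case: ltngtP => h //; last by rewrite h subnn.
by rewrite -[i - a]prednK ?subn_gt0 //= nth_nseq; case: ifP => // /negbT; lia.
Qed.

Lemma order_iso_sigma a b s : 0 < a ->
  order_iso s (sigma_ab a b) <->
  exists c d, c < d /\ s = nseq a c ++ d :: nseq b c.
Proof.
move=> ha; have h0a : (0 == a) = false by rewrite eq_sym gtn_eqF.
rewrite /sigma_ab; split.
  case/order_isoP; rewrite size_nseq_pat => hs H.
  have h0 : 0 < a + b + 1 by rewrite addn1.
  have hA : a < a + b + 1 by rewrite addn1 ltnS leq_addr.
  exists (nth 0 s 0), (nth 0 s a); split.
    have [-> _] := H 0 a ltac:(by rewrite hs) ltac:(by rewrite hs).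
    by rewrite !nth_nseq_pat // eqxx h0a.
  apply: (@eq_from_nth _ 0); first by rewrite size_nseq_pat.
  move=> i hi; rewrite hs in hi; rewrite nth_nseq_pat //.
  case: eqP => [-> // | /eqP hia].
  have [_ E] := H i 0 ltac:(by rewrite hs) ltac:(by rewrite hs).
  by move: E; rewrite !nth_nseq_pat // (negbTE hia) h0a eqxx => /eqP.
case=> c [d [hcd ->]]; apply/order_isoP; rewrite !size_nseq_pat.
split=> // i j hi hj; rewrite !nth_nseq_pat //.
case: (i == a); case: (j == a); rewrite ?ltnn ?eqxx //.
  by rewrite ltnNge ltnW // gtn_eqF.
by rewrite hcd ltn_eqF.
Qed.

Section SubseqPattern.
Variable T : eqType.
Implicit Types (w u v : seq T) (x y : T).

Lemma subseq_nseq_count a x w : subseq (nseq a x) w = (a <= count_mem x w).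
Proof.
elim: w a => [|z w IH] [|a] //=.
case: eqP => [<- | ne]; first by rewrite IH eqxx add1n ltnS.
by rewrite (IH a.+1) (negbTE (introN eqP (nesym ne))) add0n.
Qed.

Lemma subseq_cat_split u v w : subseq (u ++ v) w ->
  exists w1 w2, [/\ w = w1 ++ w2, subseq u w1 & subseq v w2].
Proof.
elim: w u => [|z w IH] u.
  by case: u => //=; case: v => // _; exists [::], [::].
case: u => [|y u] /=.
  by move=> h; exists [::], (z :: w); rewrite sub0seq.
case: eqP => [-> | ne] h.
  have [w1 [w2 [-> h1 h2]]] := IH u h.
  by exists (z :: w1), w2; rewrite /= eqxx.
have [w1 [w2 [-> h1 h2]]] := IH (y :: u) h.
exists (z :: w1), w2; split=> //.
exact: subseq_trans h1 (subseq_cons _ _).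
Qed.

Lemma subseq_cons_split y v w : subseq (y :: v) w ->
  exists w1 w2, w = w1 ++ y :: w2 /\ subseq v w2.
Proof.
elim: w => [|z w IH] //=; case: eqP => [-> h | ne h].
  by exists [::], w.
have [w1 [w2 [-> h2]]] := IH h.
by exists (z :: w1), w2.
Qed.

Lemma nseq_pat_subseqP a b x y w :
  subseq (nseq a x ++ y :: nseq b x) w <->
  exists w1 w2, [/\ w = w1 ++ y :: w2, a <= count_mem x w1 & b <= count_mem x w2].
Proof.
split.
  case/subseq_cat_split => w1 [w3 [-> h1 /subseq_cons_split [w4 [w2 [-> h2]]]]].
  exists (w1 ++ w4), w2; rewrite -catA; split=> //.
    by rewrite count_cat; apply: leq_trans (leq_addr _ _); rewrite -subseq_nseq_count.
  by rewrite -subseq_nseq_count.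
case=> w1 [w2 [-> h1 h2]]; apply: cat_subseq; first by rewrite subseq_nseq_count.
by rewrite /= eqxx subseq_nseq_count.
Qed.
End SubseqPattern.

Lemma contains_sigmaP a b w : 0 < a ->
  contains w (sigma_ab a b) <->
  exists c d, c < d /\ subseq (nseq a c ++ d :: nseq b c) w.
Proof.
move=> ha; split.
  case/containsP => s [hs /(order_iso_sigma _ _ ha) [c [d [hcd e]]]].
  by exists c, d; rewrite -e.
case=> c [d [hcd hs]]; apply/containsP; exists (nseq a c ++ d :: nseq b c).
by split=> //; apply/(order_iso_sigma _ _ ha); exists c, d.
Qed.

Fixpoint weave (m : bitseq) (r : seq nat) : seq nat :=
  match m with
  | [::] => [::]
  | true :: m' => 1 :: weave m' r
  | false :: m' => match r with
                   | [::] => 0 :: weave m' [::]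
                   | x :: r' => x.+1 :: weave m' r'
                   end
  end.

Definition pos (s : seq nat) : bool := all (fun x => 0 < x) s.
Definition ones_of (w : seq nat) : bitseq := map (fun x => x == 1) w.
Definition rest_of (w : seq nat) : seq nat :=
  map predn (filter (fun x => 1 < x) w).

Lemma rgw_pos j s : rgw_from j s -> pos s.
Proof. by elim: s j => //= x s IH j /and3P [-> _ /IH]. Qed.

Lemma rgw_head x w : rgw (x :: w) -> x = 1.
Proof. by rewrite /rgw /= => /and3P [h1 h2 _]; apply/eqP; rewrite eqn_leq h1 h2. Qed.

Lemma rgw_bound j s : rgw_from j s -> all (fun x => x <= j + size s) s.
Proof.
elim: s j => //= x s IH j /and3P [_ h1 /IH h2]; apply/andP; split.
  by apply: leq_trans h1 _; rewrite addnS ltnS leq_addr.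
apply/allP=> y /(allP h2); move/leq_trans; apply.
by rewrite addnS; move: h1; clear; rewrite /maxn; case: ifP; lia.
Qed.

Lemma size_weave m r : size (weave m r) = size m.
Proof. by elim: m r => [|[] m IH] [|x r] //=; rewrite IH. Qed.

Lemma pos_weave m r : size r = count negb m -> pos (weave m r).
Proof.
elim: m r => [|[] m IH] r //=; first exact: IH.
by case: r => [|x r] //= [h]; apply: IH.
Qed.

Lemma ones_of_weave m r : size r = count negb m -> pos r -> ones_of (weave m r) = m.
Proof.
elim: m r => [|[] m IH] r //=; first by move=> h hp; rewrite IH.
case: r => [|x r] //= [h] /andP [hx hp].
by rewrite IH // -[x]prednK.
Qed.

Lemma filter_weave m r : size r = count negb m -> pos r ->
  filter (fun x => 1 < x) (weave m r) = map S r.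
Proof.
elim: m r => [|[] m IH] r /=; first by case: r.
  by move=> h hp; rewrite IH.
case: r => [|x r] //= [h] /andP [hx hp].
by rewrite ltnS hx IH.
Qed.

Lemma rgw_from_weave j m r : size r = count negb m -> pos r ->
  rgw_from j.+1 (weave m r) = rgw_from j r.
Proof.
elim: m j r => [|[] m IH] j r //=; first by case: r.
  by move=> h hp; rewrite (maxn_idPl (ltn0Sn j)) IH.
case: r => [|x r] //= [h] /andP [hx hp].
by rewrite maxnSS hx IH.
Qed.

Lemma rest_of_cons x w :
  rest_of (x :: w) = if 1 < x then x.-1 :: rest_of w else rest_of w.
Proof. by rewrite /rest_of /=; case: ifP. Qed.

Lemma pos_rest_of w : pos (rest_of w).
Proof.
rewrite /pos /rest_of all_map; apply/allP => x.
by rewrite mem_filter /= => /andP [h _]; case: x h => [|[]].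
Qed.

Lemma size_rest_of w : pos w -> size (rest_of w) = count negb (ones_of w).
Proof.
elim: w => //= x w IH /andP [hx hp].
rewrite rest_of_cons; case: eqP => [-> | ne] /=; first by rewrite IH.
have -> : 1 < x by case: x hx ne => [|[|]].
by rewrite /= IH.
Qed.

Lemma weave_decomp w : pos w -> weave (ones_of w) (rest_of w) = w.
Proof.
elim: w => //= x w IH /andP [hx hp].
rewrite rest_of_cons; case: eqP => [-> | ne] /=; first by rewrite IH.
have -> : 1 < x by case: x hx ne => [|[|]].
by rewrite /= prednK // IH.
Qed.

Lemma order_iso_lift x s tau : all (fun y => x < y) s -> pos tau ->
  order_iso (x :: s) (1 :: map S tau) = order_iso s tau.
Proof.
move=> /all_nthP hs /all_nthP ht; apply/order_isoP/order_isoP.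
  move=> -[/= [e] H]; rewrite size_map in e; split=> // i j hi hj.
  by have := H i.+1 j.+1 hi hj; rewrite /= !(nth_map 0) -?e // ltnS eqSS.
move=> -[e H]; split; first by rewrite /= e size_map.
move=> [|i] [|j] hi hj /=; rewrite ?ltnn ?eqxx ?(nth_map 0) -?e //.
- have h1 := hs 0 j hj; have h2 := ht 0 j ltac:(by rewrite -e).
  by rewrite h1 ltnS h2 ltn_eqF // eq_sym gtn_eqF.
- have h1 := hs 0 i hi; have h2 := ht 0 i ltac:(by rewrite -e).
  by rewrite ltnNge ltnW // ltnNge ltnW //= !gtn_eqF.
by rewrite ltnS eqSS; apply: H.
Qed.

Lemma order_iso_lift_head x s tau : pos tau ->
  order_iso (x :: s) (1 :: map S tau) -> all (fun y => x < y) s.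
Proof.
move=> /all_nthP ht /order_isoP [/= [e] H]; rewrite size_map in e.
apply/(all_nthP 0) => j hj; have [-> _] := H 0 j.+1 erefl hj.
by rewrite /= (nth_map 0) -?e // ltnS; apply: ht; rewrite -e.
Qed.

Lemma contains_lift w tau : pos w -> pos tau ->
  contains (1 :: w) (1 :: map S tau) = contains (filter (fun x => 1 < x) w) tau.
Proof.
move=> hw ht; apply/containsP/containsP.
  case=> -[|x s] [hs hi]; first by move/order_isoP: hi => [].
  have hx : 0 < x.
    have : x \in 1 :: w by apply: (mem_subseq hs); rewrite mem_head.
    by rewrite inE => /predU1P [-> // | /(allP hw)].
  have gt1 : all (fun y => 1 < y) s.
    by apply: sub_all (order_iso_lift_head ht hi) => y; apply: leq_ltn_trans.
  exists s; split; last by rewrite -(order_iso_lift (order_iso_lift_head ht hi) ht).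
  rewrite subseq_filter gt1; move: hs => /=.
  by case: eqP => // _; apply: cons_subseq.
case=> s [hs hi]; move: hs; rewrite subseq_filter => /andP [gt1 hs].
by exists (1 :: s); split; rewrite /= ?eqxx ?order_iso_lift.
Qed.

Fixpoint gaps_ok (P : pred nat) (p : nat) (m : bitseq) : bool :=
  match m with
  | [::] => true
  | true :: m' => gaps_ok P p.+1 m'
  | false :: m' => P p && gaps_ok P p m'
  end.

Lemma gaps_okPn P p m : ~~ gaps_ok P p m <->
  exists m1 m2, m = m1 ++ false :: m2 /\ ~~ P (p + count id m1).
Proof.
elim: m p => [|[] m IH] p /=.
- by split=> // -[[|? ?] [? []]].
- rewrite IH; split.
    by case=> m1 [m2 [-> h]]; exists (true :: m1), m2; rewrite /= add1n -addSnnS.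
  case=> -[|[] m1] [m2 [//= [e] h]].
  by exists m1, m2; split; rewrite // addSnnS -add1n.
- rewrite negb_and; split.
    case/orP => [h | /IH [m1 [m2 [-> h]]]]; first by exists [::], m; rewrite addn0.
    by exists (false :: m1), m2.
  case=> -[|[] m1] [m2 [//= [e] h]]; first by rewrite addn0 in h; rewrite h.
  by apply/orP; right; apply/IH; exists m1, m2.
Qed.

(* In a word with i ones, a letter d > 1 after the j-th one completes an
   occurrence of 1^a d 1^b unless j < a or i - j < b. *)
Definition gap_safe (a b i j : nat) : bool := (j < a) || (i - j < b).

(* The 1s of a word, marked by m, leave no room for such a letter. *)
Definition safe_ones (a b : nat) (m : bitseq) : bool :=
  gaps_ok (gap_safe a b (count id m)) 0 m.

Lemma map_eq_cat_cons (T1 T2 : Type) (f : T1 -> T2) w m1 z m2 :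
  map f w = m1 ++ z :: m2 ->
  exists w1 y w2, [/\ w = w1 ++ y :: w2, map f w1 = m1, f y = z & map f w2 = m2].
Proof.
elim: m1 w => [|u m1 IH] [|x w] //= [e1 e2]; first by exists [::], x, w.
have [w1 [y [w2 [-> h1 h2 h3]]]] := IH w e2.
by exists (x :: w1), y, w2; rewrite /= e1 h1.
Qed.

Lemma count_ones_of w : count id (ones_of w) = count_mem 1 w.
Proof. by rewrite count_map. Qed.

(* An occurrence of sigma in a positive word either avoids the letter 1
   entirely, or uses 1 as its small letter; the latter is a gap condition on
   the positions of the 1s. *)
Lemma contains_sigma_split a b w : 0 < a -> pos w ->
  contains w (sigma_ab a b) <->
  contains (filter (fun x => 1 < x) w) (sigma_ab a b) \/ ~~ safe_ones a b (ones_of w).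
Proof.
move=> ha hw; split.
  case/(contains_sigmaP _ _ ha) => c [d [hcd hs]].
  have c0 : 0 < c.
    by apply: (allP hw); apply: (mem_subseq hs); rewrite mem_cat mem_nseq ha eqxx.
  case: (ltngtP c 1) => [| c1 | c1]; first by lia.
  - left; apply/(contains_sigmaP _ _ ha); exists c, d; split=> //.
    rewrite subseq_filter hs andbT all_cat !all_nseq c1 !orbT /= all_nseq c1 orbT andbT.
    exact: ltn_trans c1 hcd.
  right; rewrite c1 in hcd hs; case/nseq_pat_subseqP: hs => w1 [w2 [-> h1 h2]].
  apply/gaps_okPn; exists (ones_of w1), (ones_of w2).
  rewrite /ones_of map_cat /= gtn_eqF // count_cat /= add0n.
  by split=> //; rewrite /gap_safe !count_map add0n addKn negb_or -!leqNgt; apply/andP.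
case.
  case/(contains_sigmaP _ _ ha) => c [d [hcd hs]].
  apply/(contains_sigmaP _ _ ha); exists c, d; split=> //.
  exact: subseq_trans hs (filter_subseq _ _).
case/gaps_okPn => m1 [m2 [e]]; rewrite /gap_safe negb_or -!leqNgt add0n.
case/andP => h1 h2; have [w1 [y [w2 [ew e1 ey e2]]]] := map_eq_cat_cons e.
apply/(contains_sigmaP _ _ ha); exists 1, y; split.
  have : y \in w by rewrite ew mem_cat mem_head orbT.
  by move/(allP hw); move: ey; clear; case: y => [|[|y]].
apply/nseq_pat_subseqP; exists w1, w2; rewrite -!count_ones_of /ones_of e1 e2.
by move: h2; rewrite e count_cat /= addKn.
Qed.

Lemma count_all (X : eqType) (P : pred X) s : {in s, forall x, P x} ->
  count P s = size s.
Proof. by move=> h; rewrite -count_predT; apply: eq_in_count. Qed.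

Lemma count_none (X : eqType) (P : pred X) s : {in s, forall x, ~~ P x} ->
  count P s = 0.
Proof. by move=> h; rewrite -(count_pred0 s); apply: eq_in_count => x /h /negbTE. Qed.

Fixpoint bits (L : nat) : seq bitseq :=
  if L is L'.+1 then map (cons true) (bits L') ++ map (cons false) (bits L')
  else [:: [::]].

Lemma mem_bits L m : (m \in bits L) = (size m == L).
Proof.
have notin x y (u : bitseq) s : x != y -> (x :: u \in map (cons y) s) = false.
  by move=> ne; apply/negbTE/negP => /mapP [? _ [e _]]; rewrite e eqxx in ne.
elim: L m => [|L IH] [|x m] //=; rewrite mem_cat.
  by apply/negbTE; rewrite negb_or; apply/andP; split; apply/negP => /mapP [].
have ht : injective (cons true) by move=> u v [].
have hf : injective (cons false) by move=> u v [].
by case: x; rewrite ?(mem_map ht) ?(mem_map hf) ?notin // IH eqSS ?orbF.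
Qed.

Lemma uniq_bits L : uniq (bits L).
Proof.
elim: L => //= L IH; rewrite cat_uniq !map_inj_uniq ?IH; try by move=> x y [].
by rewrite andbT; apply/hasP => -[m /mapP [x _ ->] /mapP [y _]].
Qed.

(* Stars and bars: the number of ways to distribute N identical items into
   r boxes. *)
Definition stars_bars (N r : nat) : nat :=
  if r is r'.+1 then 'C(N + r', r') else (N == 0 : nat).
Arguments stars_bars : simpl never.

Lemma stars_bars0 r : stars_bars 0 r = 1.
Proof. by rewrite /stars_bars; case: r => //= r; rewrite binn. Qed.

(* Pascal's rule: either the last box is empty or it receives an item. *)
Lemma stars_barsS N r :
  stars_bars N.+1 r.+1 = stars_bars N.+1 r + stars_bars N r.+1.
Proof.
rewrite /stars_bars; case: r => [|r] /=; first by rewrite !bin0.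
by rewrite addSn binS addSnnS addnC.
Qed.

Definition ngaps (P : pred nat) (L q p : nat) : nat :=
  count (fun m => (count id m == q) && gaps_ok P p m) (bits L).

Lemma ngaps_rec P L q p : ngaps P L.+1 q p =
  (if q is q'.+1 then ngaps P L q' p.+1 else 0) + (if P p then ngaps P L q p else 0).
Proof.
rewrite /ngaps /= count_cat !count_map; congr (_ + _).
  case: q => [|q]; last by apply: eq_count => m /=; rewrite add1n eqSS.
  by rewrite count_none.
case: ifP => h; first by apply: eq_count => m /=; rewrite h.
by rewrite count_none // => m _ /=; rewrite h andbF.
Qed.

(* Closed form: the L - q falses are distributed among the allowed gaps
   p, ..., p + q. *)
Lemma ngaps_closed P L q p :
  ngaps P L q p = if q <= L then stars_bars (L - q) (count P (iota p q.+1)) else 0.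
Proof.
elim: L q p => [|L IH] q p.
  by rewrite /ngaps /=; case: q => [|q] //=; case: (P p).
rewrite ngaps_rec; case: q => [|q].
  by rewrite !IH /= !subn0; case: (P p); rewrite /stars_bars /= ?bin0.
rewrite (IH q p.+1) (IH q.+1 p) ltnS.
have -> : count P (iota p q.+2) = P p + count P (iota p.+1 q.+1) by [].
set c := count P _; case: (P p) => /=; last by rewrite addn0 add0n subSS.
case: (leqP q L) => hq; last by rewrite ltnNge (ltnW hq).
rewrite subSS add1n; case: (ltnP q L) => hqL.
  by rewrite -[L - q](@subnSK q L) // stars_barsS.
have -> : L = q by apply/eqP; rewrite eqn_leq hq hqL.
by rewrite subnn addn0 !stars_bars0.
Qed.

(* The bit sequences [ones_of w] of the words w = 1 w' avoiding the small-1
   occurrences of sigma, and their number G(n,i) by length n and number i of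
   ones. *)
Definition admissible (a b : nat) (m : bitseq) : bool :=
  head false m && safe_ones a b m.

Definition nadm (a b n i : nat) : nat :=
  count (fun m => (count id m == i) && admissible a b m) (bits n).

Lemma nadm0 a b n : nadm a b n 0 = 0.
Proof.
by rewrite /nadm count_none // => -[|[] m] _ //=; rewrite andbF.
Qed.

Lemma nadm_ngaps a b L i : nadm a b L.+1 i.+1 = ngaps (gap_safe a b i.+1) L i 1.
Proof.
rewrite /nadm /ngaps /= count_cat !count_map.
rewrite [X in _ + X](_ : _ = 0) ?addn0; last first.
  by rewrite count_none // => m _ /=; rewrite /admissible andbF.
apply: eq_count => m /=; rewrite /admissible /safe_ones /= add1n eqSS.
by case: eqP => // ->.
Qed.

(* For i < a + b every gap is allowed. *)
Lemma nadm_small a b n i : 1 <= i -> i < a + b -> i <= n ->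
  nadm a b n i = 'C(n - 1, i - 1).
Proof.
case: n i => [|L] [|i] // _ hi hn; rewrite nadm_ngaps ngaps_closed ifT; last by lia.
rewrite count_all ?size_iota => [|j /[!mem_iota] hj]; last by rewrite /gap_safe; lia.
by rewrite /stars_bars subSS subn1 /= subn0; congr binomial; lia.
Qed.

(* For i >= a + b exactly the gaps j < a and j > i - b, k - 2 of them, are
   allowed. *)
Lemma nadm_large a b n i : 1 <= a -> a + b <= i -> i <= n ->
  nadm a b n i = (if a + b + 1 == 2 then (i == n : nat)
                  else 'C(n - i + (a + b + 1) - 3, (a + b + 1) - 3)).
Proof.
case: n i => [|L] [|i] ha hi hn; try lia.
rewrite nadm_ngaps ngaps_closed ifT; last by lia.
have -> : count (gap_safe a b i.+1) (iota 1 i.+1) = a - 1 + b.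
  have -> : i.+1 = (a - 1) + ((i.+1 - b) - (a - 1)) + b by lia.
  rewrite !iotaD !count_cat count_all ?size_iota => [|j /[!mem_iota] hj]; last first.
    by rewrite /gap_safe; lia.
  rewrite count_none => [|j /[!mem_iota] hj]; last by rewrite /gap_safe; lia.
  by rewrite count_all ?size_iota => [|j /[!mem_iota] hj]; rewrite /gap_safe; lia.
rewrite /stars_bars subSS; case: (a + b + 1 =P 2) => hk.
  have -> : a - 1 + b = 0 by lia.
  by congr nat_of_bool; apply/eqP/eqP; lia.
have -> : a - 1 + b = (a + b + 1 - 3).+1 by lia.
by congr binomial; lia.
Qed.

Definition allw (n : nat) : seq (seq nat) :=
  map (fun t : n.-tuple 'I_n.+1 => map val t) (enum {: n.-tuple 'I_n.+1}).

Lemma uniq_allw n : uniq (allw n).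
Proof.
rewrite map_inj_uniq ?enum_uniq // => t1 t2 e.
by apply: val_inj; apply: (inj_map val_inj).
Qed.

Lemma mem_allw n w : (w \in allw n) = (size w == n) && all (fun x => x <= n) w.
Proof.
apply/mapP/andP.
  case=> t _ ->; rewrite size_map size_tuple; split=> //.
  by apply/allP => x /mapP [y _ ->]; rewrite -ltnS ltn_ord.
case=> /eqP hs /allP ha.
have hs' : size (map (@inord n) w) == n by rewrite size_map hs.
exists (Tuple hs'); first by rewrite mem_enum.
rewrite /= -map_comp -[LHS]map_id; apply/eq_in_map => x hx /=.
by rewrite inordK // ltnS ha.
Qed.

Lemma decPP P : reflect P (Defs.decP P).
Proof. by rewrite /Defs.decP; case: excluded_middle_informative => h; constructor. Qed.

Lemma fcount_allw n s R : fcount n s R =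
  count (fun w => [&& rgw w, ~~ contains w s & Defs.decP (avoids_all w R)]) (allw n).
Proof.
by rewrite /fcount cardsE cardE /enum_mem size_filter /allw count_map enumT.
Qed.

Lemma sum_indicator n (F : nat -> nat) j : j < n.+1 ->
  \sum_(0 <= i < n.+1) F i * (j == i) = F j.
Proof.
move=> hj; rewrite (bigD1_seq j) ?mem_index_iota ?iota_uniq //= eqxx muln1.
by rewrite big1 ?addn0 // => i; rewrite eq_sym => /negbTE ->; rewrite muln0.
Qed.

Lemma sum_by_value (X : Type) n (s : seq X) (g : X -> nat) (P : pred X)
    (F : nat -> nat) : all (fun x => g x <= n) s ->
  \sum_(x <- s | P x) F (g x) =
  \sum_(0 <= i < n.+1) F i * count (fun x => (g x == i) && P x) s.
Proof.
elim: s => [|x s IH] /=; first by rewrite big_nil big1 // => i _; rewrite muln0.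
case/andP => hx /IH {}IH; rewrite big_cons IH.
under [RHS]eq_bigr do rewrite mulnDr.
rewrite big_split /=; case: (P x).
  congr (_ + _); rewrite -(sum_indicator F hx); apply: eq_bigr => i _.
  by rewrite andbT.
by rewrite [X in _ = X + _]big1 ?add0n // => i _; rewrite andbF muln0.
Qed.

Section Bijection.
Variables (a b : nat) (T : seq nat -> Prop).
Hypothesis a_gt0 : 0 < a.
Hypothesis T_rgw : forall tau, T tau -> rgw tau.

Definition lift_ok (w : seq nat) : bool :=
  [&& rgw w, ~~ contains w (sigma_ab a b) & Defs.decP (avoids_all w (liftT T))].
Definition base_ok (w : seq nat) : bool :=
  [&& rgw w, ~~ contains w (sigma_ab a b) & Defs.decP (avoids_all w T)].

Lemma rgw_weave m r : size r = count negb m -> pos r ->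
  rgw (weave (true :: m) r) = rgw r.
Proof. by move=> hs hp; rewrite /rgw /= rgw_from_weave. Qed.

Lemma contains_sigma_weave m r : size r = count negb m -> pos r ->
  contains (weave (true :: m) r) (sigma_ab a b) <->
  contains r (sigma_ab a b) \/ ~~ safe_ones a b (true :: m).
Proof.
move=> hs hp; have hs' : size r = count negb (true :: m) by [].
rewrite (contains_sigma_split _ a_gt0 (pos_weave hs')) ones_of_weave //.
by rewrite filter_weave // contains_mapS.
Qed.

Lemma avoids_lift_weave m r : size r = count negb m -> pos r ->
  avoids_all (weave (true :: m) r) (liftT T) <-> avoids_all r T.
Proof.
move=> hs hp.
have lifted tau : T tau ->
    contains (weave (true :: m) r) (1 :: map S tau) = contains r tau.
  move=> Ttau; rewrite /= contains_lift ?(pos_weave hs) ?(rgw_pos (T_rgw Ttau)) //.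
  by rewrite filter_weave // contains_mapS.
split; first by move=> av tau Ttau; rewrite -(lifted tau Ttau); apply: av; exists tau.
by move=> av p [tau [Ttau ->]]; rewrite lifted //; apply: av.
Qed.

Definition weaves (n : nat) : seq (seq nat) :=
  [seq weave m r | m <- filter (admissible a b) (bits n),
                   r <- filter base_ok (allw (count negb m))].

Lemma weaves_sub n w : w \in weaves n -> w \in filter lift_ok (allw n).
Proof.
case/allpairsPdep => m [r [+ + ->]]; rewrite !mem_filter mem_bits mem_allw.
case/andP=> /andP [hd hsafe] /eqP hsz; case: m hd hsafe hsz => [|[] m] // _ hsafe hsz.
case/and3P => /and3P [hrg hc /decPP hav] /eqP hs _.
have {}hs : size r = count negb m := hs.
have hp := rgw_pos hrg.
have hrw : rgw (weave (true :: m) r) by rewrite rgw_weave.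
rewrite mem_allw size_weave hsz eqxx andTb; apply/andP; split.
  apply/and3P; split=> //; last by apply/decPP/(avoids_lift_weave hs hp).
  by apply/negP => /(contains_sigma_weave hs hp) [h | h]; [move/negP: hc | move/negP: h].
by have := rgw_bound hrw; rewrite size_weave hsz add0n.
Qed.

Lemma sub_weaves n w : 0 < n -> w \in filter lift_ok (allw n) -> w \in weaves n.
Proof.
move=> hn; rewrite mem_filter mem_allw => /and3P [/and3P [hr hc /decPP hav]].
case: w hr hc hav => [|x w] hr hc hav /eqP hsz _; first by rewrite -hsz in hn.
have hp : pos w by have := rgw_pos hr; rewrite /pos /= => /andP [].
have hs := size_rest_of hp; have hpr := pos_rest_of w.
have ew : weave (true :: ones_of w) (rest_of w) = x :: w.
  by rewrite /= weave_decomp // (rgw_head hr).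
have hrr : rgw (rest_of w) by rewrite -(rgw_weave hs hpr) ew.
apply/allpairsPdep; exists (true :: ones_of w), (rest_of w); split=> //.
  rewrite mem_filter mem_bits /admissible /= size_map -hsz eqxx andbT.
  apply: contraNT hc => hsafe; rewrite -ew.
  by apply/(contains_sigma_weave hs hpr); right.
rewrite mem_filter mem_allw -[count negb _]/(count negb (ones_of w)) -hs eqxx /=.
apply/andP; split; last by have := rgw_bound hrr.
apply/and3P; split=> //; last by apply/decPP/(avoids_lift_weave hs hpr); rewrite ew.
apply: contra hc => hc2; rewrite -ew.
by apply/(contains_sigma_weave hs hpr); left.
Qed.

(* A weaving determines both of its components. *)
Lemma uniq_weaves n : uniq (weaves n).
Proof.
apply: allpairs_uniq_dep.
- exact: filter_uniq (uniq_bits n).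
- by move=> m _; apply: filter_uniq (uniq_allw _).
move=> p1 p2 /allpairsPdep [m1 [r1 [_ hr1 ->]]] /allpairsPdep [m2 [r2 [_ hr2 ->]]] /=.
move: hr1 hr2; rewrite !mem_filter !mem_allw.
move=> /andP [/and3P [hg1 _ _] /andP [/eqP hs1 _]].
move=> /andP [/and3P [hg2 _ _] /andP [/eqP hs2 _]] e.
have hp1 := rgw_pos hg1; have hp2 := rgw_pos hg2.
have em : m1 = m2 by rewrite -(ones_of_weave hs1 hp1) e (ones_of_weave hs2 hp2).
suff er : r1 = r2 by rewrite em er.
by apply: (inj_map succn_inj); rewrite -(filter_weave hs1 hp1) e (filter_weave hs2 hp2).
Qed.

Lemma fcount_lift_sum n : 0 < n ->
  fcount n (sigma_ab a b) (liftT T) =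
  \sum_(0 <= i < n.+1) fcount (n - i) (sigma_ab a b) T * nadm a b n i.
Proof.
move=> hn; rewrite fcount_allw -size_filter.
have perm_ws : perm_eq (filter lift_ok (allw n)) (weaves n).
  apply: uniq_perm; [exact: filter_uniq (uniq_allw n) | exact: uniq_weaves |].
  by move=> w; apply/idP/idP; [exact: sub_weaves | exact: weaves_sub].
have sizes m : m \in filter (admissible a b) (bits n) ->
    size (filter base_ok (allw (count negb m))) =
    fcount (n - count id m) (sigma_ab a b) T.
  rewrite mem_filter mem_bits => /andP [_ /eqP hsz].
  rewrite size_filter fcount_allw; congr (count _ (allw _)).
  by rewrite -hsz -(count_predC id m) addKn.
rewrite (perm_size perm_ws) size_allpairs_dep sumnE big_map (eq_big_seq _ sizes).
rewrite big_filter.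
rewrite (sum_by_value (n := n) (g := count id) _ (fun i => fcount (n - i) _ T)) //.
by apply/allP => m; rewrite mem_bits => /eqP <-; apply: count_size.
Qed.
End Bijection.

Lemma sum_split_support (F : nat -> nat) n K : 1 <= K ->
  (forall i, n < i -> F i = 0) ->
  \sum_(1 <= i < n.+1) F i = \sum_(1 <= i < K) F i + \sum_(K <= i < n.+1) F i.
Proof.
move=> hK hF; case: (leqP K n.+1) => hKn; first by rewrite -big_cat_nat.
rewrite (big_geq (ltnW hKn)) addn0 [RHS](@big_cat_nat _ _ _ n.+1) ?(ltnW hKn) //=.
rewrite [X in _ = _ + X]big1_seq ?addn0 // => i /=.
by rewrite mem_index_iota => /andP [hi _]; apply: hF.
Qed.

Theorem lemma4p6 (a b : nat) (T : seq nat -> Prop) (n : nat) :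
  1 <= a ->
  (forall tau, T tau -> rgw tau) ->
  1 <= n ->
  fcount n (sigma_ab a b) (liftT T) =
    \sum_(1 <= i < (a + b + 1) - 1)
        fshift n i (sigma_ab a b) T * 'C(n - 1, i - 1)
  + \sum_((a + b + 1) - 1 <= i < n.+1)
        fshift n i (sigma_ab a b) T *
        (if a + b + 1 == 2 then (i == n : nat)
         else 'C(n - i + (a + b + 1) - 3, (a + b + 1) - 3)).
Proof.
move=> ha hT hn; rewrite fcount_lift_sum //.
pose G i := fshift n i (sigma_ab a b) T * nadm a b n i.
rewrite (eq_big_nat _ _ (F2 := G)) => [|i /andP [_ hi]]; last first.
  by rewrite /G /fshift -ltnS hi.
rewrite big_ltn // {1}/G nadm0 muln0 add0n.
have vanish i : n < i -> G i = 0 by move=> hi; rewrite /G /fshift leqNgt hi.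
rewrite (sum_split_support (K := a + b + 1 - 1) _ vanish); last by lia.
congr (_ + _); apply: eq_big_nat => i /andP [h1 h2]; rewrite /G /fshift.
  by case: leqP => hi //; rewrite nadm_small //; lia.
by rewrite -ltnS h2 nadm_large //; lia.
Qed.
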